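(* Martin's axiom for the partial ordering $\mathrm{Fn}(\omega_1,2)$ implies ${\mathrm{stick}}={\mathrm{stick}}'=2^{\aleph_0}$. Further, if $\mathrm{MA}(\mathit{Cohen})$ holds, then also ${\mathrm{stick}}''=2^{\aleph_0}$.
   Context: $\mathrm{Fn}(\kappa,2)$ is the set of functions from a finite subset of $\kappa$ to $2$ ordered by reverse inclusion. Martin's axiom for a partial ordering $P$: for every family of fewer than $2^{\aleph_0}$ dense subsets of $P$ there is a filter on $P$ meeting all of them. $\mathrm{MA}(\mathit{Cohen})$ is Martin's axiom for all partial orderings of the form $\mathrm{Fn}(\kappa,2)$. ${\mathrm{stick}}$ is the least cardinality of $X\subseteq[\omega_1]^{\aleph_0}$ such that every $y\in[\omega_1]^{\aleph_1}$ has a subset in $X$. ${\mathrm{stick}}'$ (resp. ${\mathrm{stick}}''$) is the least cardinal $\kappa\geq\aleph_1$ for which there is $X\subseteq[\kappa]^{\aleph_0}$ with $|X|=\kappa$ such that every $y\in[\kappa]^{\aleph_1}$ (resp. every $y\in[\kappa]^{\kappa}$) has a subset in $X$. *)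

From Stdlib Require Import List.

Definition injective {A B : Type} (f : A -> B) : Prop :=
  forall x y, f x = f y -> x = y.
Definition surjective {A B : Type} (f : A -> B) : Prop :=
  forall y, exists x, f x = y.

Definition le_card (A B : Type) : Prop := exists f : A -> B, injective f.
Definition eq_card (A B : Type) : Prop :=
  exists f : A -> B, injective f /\ surjective f.
Definition lt_card (A B : Type) : Prop := le_card A B /\ ~ le_card B A.

Definition countable (A : Type) : Prop := exists f : A -> nat, injective f.

Definition continuum : Type := nat -> bool.

Definition subset {K : Type} (A B : K -> Prop) : Prop := forall x, A x -> B x.

Definition is_omega1 {W : Type} (lt : W -> W -> Prop) : Prop :=
  well_founded lt /\
  (forall x y z, lt x y -> lt y z -> lt x z) /\
  (forall x y, lt x y \/ x = y \/ lt y x) /\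
  ~ countable W /\
  (forall x, countable {y : W | lt y x}).

(** * Martin's axiom for a partial ordering (P, le); le q p means q extends p *)
Definition dense {P : Type} (le : P -> P -> Prop) (D : P -> Prop) : Prop :=
  forall p, exists q, le q p /\ D q.

Definition is_filter {P : Type} (le : P -> P -> Prop) (G : P -> Prop) : Prop :=
  (exists p, G p) /\
  (forall p q, G p -> le p q -> G q) /\
  (forall p q, G p -> G q -> exists r, G r /\ le r p /\ le r q).

Definition MA_for {P : Type} (le : P -> P -> Prop) : Prop :=
  forall F : (P -> Prop) -> Prop,
    lt_card {D : P -> Prop | F D} continuum ->
    (forall D, F D -> dense le D) ->
    exists G, is_filter le G /\ forall D, F D -> exists p, G p /\ D p.

Definition Fn (K : Type) : Type :=
  {p : K -> option bool | exists l : list K, forall x, p x <> None -> In x l}.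

(** le_Fn p q : p extends q (p is stronger), i.e. q ⊆ p as graphs. *)
Definition le_Fn {K : Type} (p q : Fn K) : Prop :=
  forall x b, proj1_sig q x = Some b -> proj1_sig p x = Some b.

Definition MA_Cohen : Prop := forall K : Type, MA_for (@le_Fn K).

Definition ctbl_infinite {K : Type} (A : K -> Prop) : Prop :=
  eq_card {x : K | A x} nat.

Definition sticky_for (K L : Type) (X : (K -> Prop) -> Prop) : Prop :=
  (forall A, X A -> ctbl_infinite A) /\
  (forall y : K -> Prop, eq_card {x : K | y x} L ->
     exists A, X A /\ subset A y).

(** stick = 2^aleph_0, with W = omega_1: the least cardinality of a family
    X ⊆ [omega_1]^{aleph_0} such that every y ∈ [omega_1]^{aleph_1} has a
    subset in X equals the continuum, i.e. it is attained at the continuum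
    and no such family is smaller. *)
Definition stick_eq_c (W : Type) : Prop :=
  (exists X, sticky_for W W X /\ eq_card {A | X A} continuum) /\
  (forall X, sticky_for W W X -> le_card continuum {A | X A}).

(** stick' = 2^aleph_0: the continuum is the least cardinal kappa >= aleph_1
    having X ⊆ [kappa]^{aleph_0}, |X| = kappa, with every y ∈ [kappa]^{aleph_1}
    containing a member of X. *)
Definition stick'_prop (W K : Type) : Prop :=
  exists X, sticky_for K W X /\ eq_card {A | X A} K.

Definition stick'_eq_c (W : Type) : Prop :=
  stick'_prop W continuum /\
  (forall K : Type, le_card W K -> lt_card K continuum -> ~ stick'_prop W K).

(** stick'' = 2^aleph_0: same with y ∈ [kappa]^kappa. *)
Definition stick''_prop (W K : Type) : Prop :=
  exists X, sticky_for K K X /\ eq_card {A | X A} K.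

Definition stick''_eq_c (W : Type) : Prop :=
  stick''_prop W continuum /\
  (forall K : Type, le_card W K -> lt_card K continuum -> ~ stick''_prop W K).

(* Under MA for Fn(V,2), no family X of fewer than 2^aleph_0 countable subsets
   of K can contain a subset of every y of size |V| (V embedded in K).  By
   Zorn's lemma all of V but a Dedekind-finite part is split into pairs
   {j x true, j x false}; a generic g : V -> 2 picks the point j x (g x) of each
   pair, and the picked points together with the unpaired rest give a set y of
   size |V|.  For a countable A it is dense to make some point of A the unpicked
   member of its pair, and MA yields a g meeting these fewer than 2^aleph_0
   dense sets, so no member of X lies inside y.  Hence stick, stick' and
   stick'' are at least 2^aleph_0; they are at most 2^aleph_0 because the
   countable subsets of 2^aleph_0 (or of omega_1, which injects into
   2^aleph_0) form a family of size 2^aleph_0 that catches every uncountable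
   set. *)

From mathcomp Require Import ssreflect ssrfun ssrbool eqtype.
From mathcomp Require Import boolp classical_sets cardinality.
From Stdlib Require Import PeanoNat List Lia Cantor.

Set Implicit Arguments.
Unset Strict Implicit.

Lemma le_card_refl A : le_card A A.
Proof. by exists id. Qed.

Lemma le_card_trans A B C : le_card A B -> le_card B C -> le_card A C.
Proof. by move=> [f f_inj] [g g_inj]; exists (g \o f) => x y /g_inj /f_inj. Qed.

Lemma eq_card_le A B : eq_card A B -> le_card A B.
Proof. by move=> [f [f_inj _]]; exists f. Qed.

Lemma eq_card_ge A B : eq_card A B -> le_card B A.
Proof.
move=> [f [_ f_surj]]; have [g fgK] := choice f_surj.
by exists g => x y gxy; rewrite -(fgK x) -(fgK y) gxy.
Qed.

Lemma le_lt_card_trans A B C : le_card A B -> lt_card B C -> lt_card A C.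
Proof.
move=> AB [BC CB]; split; first exact: (le_card_trans AB BC).
by move=> CA; apply: CB; apply: le_card_trans AB.
Qed.

Lemma le_card_setT A B : le_card A B -> ([set: A] #<= [set: B])%card.
Proof.
move=> [f f_inj].
have fT : ([set: A] #= f @` [set: A])%card.
  by rewrite card_eq_sym; apply: inj_card_eq => x y _ _; exact: f_inj.
by rewrite (card_le_eql fT); apply: subset_card_le.
Qed.

Lemma eq_card_setT A B : ([set: A] #= [set: B])%card -> eq_card A B.
Proof.
move=> /card_bijP[f [g fK gK]].
pose inT C (x : C) : [set: C]%classic := exist _ x (mem_set (I : setT x)).
exists (fun x => val (f (inT _ x))); split.
- by move=> x y /val_inj/(can_inj fK)/(congr1 val).
- move=> y; exists (val (g (inT _ y))).
  by rewrite (_ : inT _ _ = g (inT _ y)) ?gK //; apply: val_inj.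
Qed.

Lemma le_card_antisym A B : le_card A B -> le_card B A -> eq_card A B.
Proof.
by move=> /le_card_setT AB /le_card_setT BA; apply/eq_card_setT/Cantor_Bernstein.
Qed.

Lemma proj1_sig_inj T (P : T -> Prop) : injective (@proj1_sig T P).
Proof. by move=> [x Px] [y Py] /= xy; apply: eq_exist. Qed.

Lemma eq_card_range U V (f : U -> V) :
  injective f -> eq_card {y | exists x, f x = y} U.
Proof.
move=> f_inj; pose h (y : {y | exists x, f x = y}) := cid (proj2_sig y).
exists (fun y => proj1_sig (h y)); split.
- move=> y1 y2 e12; apply: proj1_sig_inj.
  by rewrite -(proj2_sig (h y1)) -(proj2_sig (h y2)) e12.
- move=> x; exists (exist _ (f x) (ex_intro _ x erefl)).
  by apply: f_inj; rewrite (proj2_sig (h (exist _ _ _))).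
Qed.

Lemma le_card_image_sig T U (f : T -> U) (X : T -> Prop) :
  le_card {u | exists t, X t /\ u = f t} {t | X t}.
Proof.
pose h (u : {u | exists t, X t /\ u = f t}) := cid (proj2_sig u).
exists (fun u => exist X _ (proj2_sig (h u)).1).
move=> u1 u2 /(congr1 (@proj1_sig _ _)) /= e12; apply: proj1_sig_inj.
by rewrite (proj2_sig (h u1)).2 (proj2_sig (h u2)).2 e12.
Qed.

Lemma ctbl_infinite_enum K (A : K -> Prop) : ctbl_infinite A ->
  exists e : nat -> K, injective e /\ forall x, A x <-> exists n, e n = x.
Proof.
move=> [f [f_inj f_surj]]; have [g fgK] := choice f_surj.
exists (fun n => proj1_sig (g n)); split.
- by move=> m n /proj1_sig_inj gmn; rewrite -(fgK m) -(fgK n) gmn.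
- move=> x; split=> [Ax | [n <-]]; last exact: proj2_sig.
  exists (f (exist _ x Ax)).
  by rewrite (f_inj (g _) (exist _ x Ax)) // fgK.
Qed.

Lemma sticky_for_ctbl_infinite K L :
  le_card nat L -> sticky_for K L ctbl_infinite.
Proof.
move=> nat_L; split=> // y /eq_card_ge /(le_card_trans nat_L) [h h_inj].
exists (fun x => exists n, proj1_sig (h n) = x); split.
- by apply: eq_card_range => m n /proj1_sig_inj /h_inj.
- by move=> _ [n <-]; exact: proj2_sig.
Qed.

Lemma le_card_nat_continuum : le_card nat continuum.
Proof.
exists Nat.eqb => m n /(congr1 (fun r => r n)).
by rewrite Nat.eqb_refl => /Nat.eqb_eq.
Qed.

Lemma le_card_ctbl_subsets T :
  le_card T continuum -> le_card {A : T -> Prop | ctbl_infinite A} continuum.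
Proof.
move=> [i i_inj].
have [en enP] := choice (fun A : {A : T -> Prop | ctbl_infinite A} =>
  ctbl_infinite_enum (proj2_sig A)).
exists (fun A k => i (en A (Cantor.of_nat k).1) (Cantor.of_nat k).2).
move=> A B AB.
have enAB n : en A n = en B n.
  apply: i_inj; apply: funext => m.
  have := congr1 (fun r => r (Cantor.to_nat (n, m))) AB.
  by cbv beta; rewrite Cantor.cancel_of_to.
apply: proj1_sig_inj; apply: funext => x; apply: propext.
rewrite (proj2 (enP A)) (proj2 (enP B)).
by split=> [[n <-] | [n <-]]; exists n.
Qed.

Lemma double_b2n_inj n b n' b' :
  2 * n + Nat.b2n b = 2 * n' + Nat.b2n b' -> n = n' /\ b = b'.
Proof. by case: b b' => [] [] /= nn'; split=> //; lia. Qed.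

Lemma ge_card_ctbl_subsets T :
  le_card nat T -> le_card continuum {A : T -> Prop | ctbl_infinite A}.
Proof.
move=> [e e_inj].
have code_inj (r : continuum) : injective (fun n => e (2 * n + Nat.b2n (r n))).
  by move=> m n /e_inj /double_b2n_inj [].
exists (fun r => exist (@ctbl_infinite T) _ (eq_card_range (code_inj r))).
move=> r s rs; apply: funext => n.
have /= rn_s := congr1 (fun A => proj1_sig A (e (2 * n + Nat.b2n (r n)))) rs.
have : exists m, e (2 * m + Nat.b2n (s m)) = e (2 * n + Nat.b2n (r n)).
  by rewrite -rn_s; exists n.
by move=> [m /e_inj /double_b2n_inj [-> <-]].
Qed.

Lemma eq_card_ctbl_subsets T : le_card nat T -> le_card T continuum ->
  eq_card {A : T -> Prop | ctbl_infinite A} continuum.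
Proof.
by move=> nat_T T_c; apply: le_card_antisym;
  [exact: le_card_ctbl_subsets | exact: ge_card_ctbl_subsets].
Qed.

Lemma sticky_le_card_ctbl_subsets K L X : sticky_for K L X ->
  le_card {A | X A} {A : K -> Prop | ctbl_infinite A}.
Proof.
move=> [X_ctbl _]; exists (fun A => exist _ _ (X_ctbl _ (proj2_sig A))).
by move=> A B /(congr1 (@proj1_sig _ _)) /= /proj1_sig_inj.
Qed.

(** * omega_1 injects into the continuum *)

Lemma uncountable_le_card_nat T : ~ countable T -> le_card nat T.
Proof.
move=> T_unc.
have fresh (l : list T) : exists x, ~ In x l.
  apply: contrapT => all_in; apply: T_unc.
  have idx x : exists n, nth_error l n = Some x.
    by apply: In_nth_error; apply: contrapT => x_l; apply: all_in; exists x.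
  have [f fP] := choice idx; exists f => x y fxy.
  by move: (fP x) (fP y); rewrite fxy => -> [].
have [fr frP] := choice fresh.
pose g := fix g n := if n is S n then fr (g n) :: g n else nil.
have g_grows m n : m < n -> In (fr (g m)) (g n).
  by elim=> [|k _ IH] /=; [left | right].
exists (fun n => fr (g n)) => m n frmn.
case: (Nat.lt_total m n) => [mn | [// | nm]]; exfalso.
- by apply: (frP (g n)); rewrite -frmn; apply: g_grows.
- by apply: (frP (g m)); rewrite frmn; apply: g_grows.
Qed.

Section Omega1.
Variables (W : Type) (lt : W -> W -> Prop).
Hypothesis W_omega1 : is_omega1 lt.

Let lt_wf : well_founded lt := W_omega1.1.
Let lt_trans : forall x y z, lt x y -> lt y z -> lt x z := W_omega1.2.1.
Let lt_total : forall x y, lt x y \/ x = y \/ lt y x := W_omega1.2.2.1.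
Let segment_countable : forall x, countable {y : W | lt y x} := W_omega1.2.2.2.2.

Lemma omega1_irrefl x : ~ lt x x.
Proof.
elim/(well_founded_ind lt_wf): x => x IH x_x.
exact: (IH x x_x x_x).
Qed.

Lemma increasing_not_below (b : W) (h : W -> W) :
  (forall y, lt y b -> lt (h y) b) ->
  (forall y z, lt y b -> lt z b -> lt y z -> lt (h y) (h z)) ->
  forall x, lt x b -> ~ lt (h x) x.
Proof.
move=> h_b h_incr x; elim/(well_founded_ind lt_wf): x => x IH x_b hx_x.
exact: (IH (h x) hx_x (h_b x x_b) (h_incr _ _ (h_b x x_b) x_b hx_x)).
Qed.

(* The order type of the segment below [a], copied to [nat] along [F]. *)
Definition segment_relation (F : W -> nat) (a : W) (mn : nat * nat) : Prop :=
  exists y z, lt y a /\ lt z a /\ ~ lt z y /\ F y = mn.1 /\ F z = mn.2.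

Lemma segment_relation_lt_neq (F : W -> W -> nat) a b :
  (forall y z, lt y b -> lt z b -> F b y = F b z -> y = z) ->
  (forall y z, lt y a -> lt z a -> F a y = F a z -> y = z) ->
  lt a b -> segment_relation (F a) a <> segment_relation (F b) b.
Proof.
move=> Fb_inj Fa_inj ab Rab.
have h_ex y : exists y', lt y b -> lt y' a /\ F a y' = F b y.
  case: (pselect (lt y b)) => [yb | nyb]; last by exists y.
  have : segment_relation (F b) b (F b y, F b y).
    by exists y, y; do 2!split=> //; split; [exact: omega1_irrefl | split].
  by rewrite -Rab => -[y' [_ [y'a [_ [_ [Fy' _]]]]]]; exists y'.
have [h hP] := choice h_ex.
have h_incr y z : lt y b -> lt z b -> lt y z -> lt (h y) (h z).
  move=> yb zb yz.
  have : segment_relation (F b) b (F b y, F b z).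
    exists y, z; do 2!split=> //; split; last by split.
    by move=> zy; apply: omega1_irrefl (lt_trans yz zy).
  rewrite -Rab /segment_relation /= => -[y' [z' [y'a [z'a [nz'y' [Fy' Fz']]]]]].
  have [hya Fhy] := hP y yb; have [hza Fhz] := hP z zb.
  have -> : h y = y' by apply: Fa_inj; rewrite // Fy' Fhy.
  have -> : h z = z' by apply: Fa_inj; rewrite // Fz' Fhz.
  case: (lt_total y' z') => [// | [y'z' | //]].
  have yz_eq : y = z by apply: Fb_inj; rewrite // -Fy' -Fz' y'z'.
  by move: yz; rewrite yz_eq => /omega1_irrefl.
apply: (increasing_not_below _ h_incr ab (hP a ab).1) => y yb.
exact: lt_trans (hP y yb).1 ab.
Qed.

Lemma omega1_le_card_continuum : le_card W continuum.
Proof.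
have F_ex a : exists Fa : W -> nat,
    forall y z, lt y a -> lt z a -> Fa y = Fa z -> y = z.
  have [f f_inj] := segment_countable a.
  exists (fun y => if pselect (lt y a) is left ya then f (exist _ y ya) else 0).
  move=> y z ya za; case: (pselect (lt y a)) => // ya'.
  by case: (pselect (lt z a)) => // za' /f_inj /(congr1 (@proj1_sig _ _)).
have [F F_inj] := choice F_ex.
exists (fun a k => `[< segment_relation (F a) a (Cantor.of_nat k) >]).
move=> a b code_ab.
have Rab : segment_relation (F a) a = segment_relation (F b) b.
  apply: funext => mn; apply: propext.
  have := congr1 (fun r => r (Cantor.to_nat mn)) code_ab.
  cbv beta; rewrite Cantor.cancel_of_to => e.
  by split=> /asboolT; [rewrite e | rewrite -e] => /asboolP.
case: (lt_total a b) => [ab | [// | ba]].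
- by case: (segment_relation_lt_neq (F_inj b) (F_inj a) ab).
- by case: (segment_relation_lt_neq (F_inj a) (F_inj b) ba).
Qed.

End Omega1.

(** * Doubling almost all of a type *)

(* [R (x, b, a)] reads [j x b = a] for a partial doubling [j]. *)
Record pairing_graph V (R : V * bool * V -> Prop) : Prop := {
  pairing_functional : forall x b a a', R (x, b, a) -> R (x, b, a') -> a = a';
  pairing_injective : forall x b x' b' a,
    R (x, b, a) -> R (x', b', a) -> x = x' /\ b = b';
  pairing_total : forall x b b' a, R (x, b, a) -> exists a', R (x, b', a');
  pairing_closed : forall x b a, R (x, b, a) -> exists a', R (a, false, a') }.

Lemma pairing_graph_bigcup V (F : (V * bool * V -> Prop) -> Prop) :
  (forall R, F R -> pairing_graph R) ->
  (forall R R', F R -> F R' -> subset R R' \/ subset R' R) ->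
  pairing_graph (fun t => exists2 R, F R & R t).
Proof.
move=> F_pairing F_chain.
have common R1 R2 t1 t2 :
    F R1 -> F R2 -> R1 t1 -> R2 t2 -> exists2 R, F R & R t1 /\ R t2.
  move=> FR1 FR2 Rt1 Rt2; case: (F_chain R1 R2 FR1 FR2) => sub.
  - by exists R2 => //; split; first apply: sub.
  - by exists R1 => //; split; last apply: sub.
split.
- move=> x b a a' [R1 FR1 H1] [R2 FR2 H2].
  have [R FR [{}H1 {}H2]] := common _ _ _ _ FR1 FR2 H1 H2.
  exact: (pairing_functional (F_pairing R FR) H1 H2).
- move=> x b x' b' a [R1 FR1 H1] [R2 FR2 H2].
  have [R FR [{}H1 {}H2]] := common _ _ _ _ FR1 FR2 H1 H2.
  exact: (pairing_injective (F_pairing R FR) H1 H2).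
- move=> x b b' a [R FR H].
  have [a' H'] := pairing_total (F_pairing R FR) b' H.
  by exists a', R.
- move=> x b a [R FR H].
  have [a' H'] := pairing_closed (F_pairing R FR) H.
  by exists a', R.
Qed.

Lemma pairing_graph_extend V (R : V * bool * V -> Prop) (s : nat -> V) :
  pairing_graph R -> injective s -> (forall n a, ~ R (s n, false, a)) ->
  pairing_graph (fun t => R t \/ exists n b, t = (s n, b, s (2 * n + Nat.b2n b))).
Proof.
move=> R_pairing s_inj s_out.
have out_src n b a : ~ R (s n, b, a).
  by move=> /(pairing_total R_pairing false) [a' /s_out].
have out_tgt x b n : ~ R (x, b, s n).
  by move=> /(pairing_closed R_pairing) [a' /s_out].
split.
- move=> x b a a' [H1 | [n1 [b1 E1]]] [H2 | [n2 [b2 E2]]].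
  + exact: (pairing_functional R_pairing H1 H2).
  + by case: E2 => ? ? ?; subst; case: (out_src _ _ _ H1).
  + by case: E1 => ? ? ?; subst; case: (out_src _ _ _ H2).
  + by case: E1 => ? ? ?; subst; case: E2 => /s_inj -> -> ->.
- move=> x b x' b' a [H1 | [n1 [b1 E1]]] [H2 | [n2 [b2 E2]]].
  + exact: (pairing_injective R_pairing H1 H2).
  + by case: E2 => ? ? ?; subst; case: (out_tgt _ _ _ H1).
  + by case: E1 => ? ? ?; subst; case: (out_tgt _ _ _ H2).
  + by case: E1 => ? ? ?; subst; case: E2 => ? ? /s_inj /double_b2n_inj [-> ->].
- move=> x b b' a [H | [n [b1 E]]].
  + by have [a' H'] := pairing_total R_pairing b' H; exists a'; left.
  + by case: E => -> _ _; exists (s (2 * n + Nat.b2n b')); right; exists n, b'.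
- move=> x b a [H | [n [b1 E]]].
  + by have [a' H'] := pairing_closed R_pairing H; exists a'; left.
  + case: E => _ _ ->; exists (s (2 * (2 * n + Nat.b2n b1) + 0)).
    by right; exists (2 * n + Nat.b2n b1), false.
Qed.

Record doubling V (S : V -> Prop) (j : V -> bool -> V) : Prop := {
  doubling_closed : forall x b, S x -> S (j x b);
  doubling_inj : forall x b x' b',
    S x -> S x' -> j x b = j x' b' -> x = x' /\ b = b';
  doubling_dfinite : ~ exists s : nat -> V, injective s /\ forall n, ~ S (s n) }.

Lemma doubling_exists V : exists (S : V -> Prop) j, doubling S j.
Proof.
have [R [R_pairing R_max]] := Zorn_bigcup (@pairing_graph_bigcup V).
pose S x := exists a, R (x, false, a).
have j_ex (xb : V * bool) : exists a, S xb.1 -> R (xb.1, xb.2, a).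
  case: (pselect (S xb.1)) => [[a0 H0] | nS]; last by exists xb.1.
  by have [a H] := pairing_total R_pairing xb.2 H0; exists a.
have [j jP] := choice j_ex.
exists S, (fun x b => j (x, b)); split.
- move=> x b Sx; have [a' H'] := pairing_closed R_pairing (jP (x, b) Sx).
  by exists a'.
- move=> x b x' b' Sx Sx' jj.
  have /= Rx := jP (x, b) Sx; have /= Rx' := jP (x', b') Sx'.
  by rewrite jj in Rx; apply: (pairing_injective R_pairing Rx Rx').
- move=> [s [s_inj s_out]].
  have s_out' n a : ~ R (s n, false, a) by move=> H; apply: (s_out n); exists a.
  apply: R_max (pairing_graph_extend R_pairing s_inj s_out'); split.
  + by move=> t Rt; left.
  + move=> /(_ (s 0, false, s 0)) R'_R; apply: (s_out' 0 (s 0)).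
    by apply: R'_R; right; exists 0, false.
Qed.

Lemma Fn_upd_support V (p : Fn V) x c : exists l : list V, forall z,
  (if pselect (z = x) then Some c else proj1_sig p z) <> None -> In z l.
Proof.
have [l l_supp] := proj2_sig p; exists (x :: l) => z.
by case: pselect => [zx _ | _ /l_supp]; [left | right].
Qed.

Definition Fn_upd V (p : Fn V) x c : Fn V := exist _ _ (Fn_upd_support p x c).

Lemma Fn_upd_le V (p : Fn V) x c :
  proj1_sig p x = None -> le_Fn (Fn_upd p x c) p.
Proof. by move=> px z b /=; case: pselect => [zx | //] /=; rewrite zx px. Qed.

Lemma Fn_upd_at V (p : Fn V) x c : proj1_sig (Fn_upd p x c) x = Some c.
Proof. by rewrite /=; case: pselect. Qed.

Lemma filter_Fn_function V (G : Fn V -> Prop) : is_filter le_Fn G ->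
  exists g : V -> bool, forall p v c, G p -> proj1_sig p v = Some c -> g v = c.
Proof.
move=> [_ [_ G_dir]].
exists (fun v => `[< exists p, G p /\ proj1_sig p v = Some true >]).
move=> p v [] Gp pv; first by apply/asboolP; exists p.
apply/negbTE/asboolPn => -[q [Gq qv]].
have [r [_ [rp rq]]] := G_dir p q Gp Gq.
by move: (rp _ _ pv) (rq _ _ qv) => ->.
Qed.

Lemma injective_eventually_notin T (s : nat -> T) (E : list T) :
  injective s -> exists N, forall n, N <= n -> ~ In (s n) E.
Proof.
move=> s_inj; elim: E => [|x E [N HN]]; first by exists 0 => n _ [].
case: (pselect (exists m, s m = x)) => [[m <-] | no_x].
- exists (N + S m) => n Nn [/s_inj mn | ]; first lia.
  by apply: HN; lia.
- by exists N => n Nn [sx | ]; [apply: no_x; exists n | apply: HN].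
Qed.

Lemma exists_fresh_point T (s : nat -> T) (Bad : T -> Prop) (E : list T) :
  injective s -> ~ (exists t : nat -> T, injective t /\ forall n, Bad (t n)) ->
  exists n, ~ Bad (s n) /\ ~ In (s n) E.
Proof.
move=> s_inj no_bad_seq; have [N HN] := injective_eventually_notin E s_inj.
apply: contrapT => no_fresh; apply: no_bad_seq.
exists (fun n => s (N + n)); split; first by move=> m n /s_inj; lia.
move=> n; apply: contrapT => bad_n; apply: no_fresh; exists (N + n).
by split=> //; apply: HN; lia.
Qed.

Section AvoidingSet.
Variables (V K : Type) (e : V -> K) (S : V -> Prop) (j : V -> bool -> V).
Hypotheses (e_inj : injective e) (Sj : doubling S j).

(* [p] keeps the point [a] of [A] out of the set picked by any [g] extending
   [p]: [a] comes from [S], and from no pair member that [p] lets be picked. *)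
Definition excludes (A : K -> Prop) (p : Fn V) : Prop :=
  exists a, A a /\ forall v, e v = a ->
    S v /\ forall x b, S x -> j x b = v -> proj1_sig p x = Some (negb b).

Lemma excludes_dense A : ctbl_infinite A -> dense le_Fn (excludes A).
Proof.
move=> A_ctbl p; have [s [s_inj sA]] := ctbl_infinite_enum A_ctbl.
have [l l_supp] := proj2_sig p.
pose Bad k := exists v, e v = k /\ ~ S v.
have no_bad_seq : ~ exists t : nat -> K, injective t /\ forall n, Bad (t n).
  move=> [t [t_inj t_bad]]; apply: (doubling_dfinite Sj).
  have [u uP] := choice t_bad.
  exists u; split=> [m n umn | n]; last exact: (uP n).2.
  by apply: t_inj; rewrite -(uP m).1 -(uP n).1 umn.
pose E := flat_map (fun x => e (j x true) :: e (j x false) :: nil) l.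
have [n [good fresh]] := exists_fresh_point E s_inj no_bad_seq.
have S_pre v : e v = s n -> S v.
  by move=> ev; apply: contrapT => nSv; apply: good; exists v.
have A_sn : A (s n) by apply/sA; exists n.
case: (pselect (exists x b, S x /\ e (j x b) = s n)) => [[x [b [Sx xb]]] | no_pair].
- have px : proj1_sig p x = None.
    case p_x : (proj1_sig p x) => [c|] //; case: fresh.
    rewrite -xb; apply/in_flat_map; exists x; split.
      by apply: l_supp; rewrite p_x.
    by case: (b); [left | right; left].
  exists (Fn_upd p x (negb b)); split; first exact: Fn_upd_le.
  exists (s n); split=> // v ev; split; first exact: S_pre.
  move=> x' b' Sx' jv; have [-> ->] : x' = x /\ b' = b.
    by apply: (doubling_inj Sj Sx' Sx); apply: e_inj; rewrite jv ev xb.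
  exact: Fn_upd_at.
- exists p; split=> //; exists (s n); split=> // v ev; split; first exact: S_pre.
  by move=> x b Sx jv; case: no_pair; exists x, b; rewrite jv.
Qed.

Definition pick_from_pairs (g : V -> bool) (v : V) : V :=
  if pselect (S v) then j v (g v) else v.

Lemma pick_from_pairs_inj g : injective (pick_from_pairs g).
Proof.
move=> v w; rewrite /pick_from_pairs.
case: (pselect (S v)); case: (pselect (S w)) => /= Sw Sv.
- by move/(doubling_inj Sj Sv Sw) => [].
- by move=> jw; case: Sw; rewrite -jw; exact: (doubling_closed Sj).
- by move=> vj; case: Sv; rewrite vj; exact: (doubling_closed Sj).
- by [].
Qed.

Lemma MA_avoiding_set (X : (K -> Prop) -> Prop) :
  MA_for (@le_Fn V) -> (forall A, X A -> ctbl_infinite A) ->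
  lt_card {A | X A} continuum ->
  exists y : K -> Prop, eq_card {k | y k} V /\ forall A, X A -> ~ subset A y.
Proof.
move=> MA X_ctbl X_small.
pose F D := exists A, X A /\ D = excludes A.
have F_small : lt_card {D | F D} continuum.
  exact: (le_lt_card_trans (le_card_image_sig _ _) X_small).
have F_dense D : F D -> dense le_Fn D.
  by move=> [A [XA ->]]; apply: excludes_dense; apply: X_ctbl.
have [G [G_filter G_meets]] := MA F F_small F_dense.
have [g gG] := filter_Fn_function G_filter.
exists (fun k => exists v, e (pick_from_pairs g v) = k); split.
  by apply: eq_card_range => v w /e_inj /pick_from_pairs_inj.
move=> A XA A_y.
have [p [Gp [a [Aa a_excl]]]] := G_meets _ (ex_intro _ A (conj XA erefl)).
have [v ev] := A_y a Aa; have [S_pick pick_excl] := a_excl _ ev.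
move: S_pick pick_excl; rewrite /pick_from_pairs; case: pselect => // Sv _.
by move=> /(_ v (g v) Sv erefl) /(gG _ _ _ Gp); case: (g v).
Qed.

End AvoidingSet.

Lemma sticky_family_not_small V K X : MA_for (@le_Fn V) -> le_card V K ->
  sticky_for K V X -> ~ lt_card {A | X A} continuum.
Proof.
move=> MA [e e_inj] [X_ctbl X_sticky] X_small.
have [S [j Sj]] := doubling_exists V.
have [y [y_card y_free]] := MA_avoiding_set e_inj Sj MA X_ctbl X_small.
by have [A [XA Ay]] := X_sticky y y_card; apply: (y_free A XA Ay).
Qed.

Lemma no_small_sticky_family V K : MA_for (@le_Fn V) -> le_card V K ->
  lt_card K continuum -> ~ exists X, sticky_for K V X /\ eq_card {A | X A} K.
Proof.
move=> MA V_K K_small [X [X_sticky X_K]].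
apply: (sticky_family_not_small MA V_K X_sticky).
exact: (le_lt_card_trans (eq_card_le X_K) K_small).
Qed.

Lemma continuum_sticky_family L : le_card nat L ->
  exists X, sticky_for continuum L X /\ eq_card {A | X A} continuum.
Proof.
move=> nat_L; exists ctbl_infinite; split; first exact: sticky_for_ctbl_infinite.
exact: (eq_card_ctbl_subsets le_card_nat_continuum (le_card_refl _)).
Qed.

Unset Implicit Arguments.

Theorem fact1p3 (W : Type) (ltW : W -> W -> Prop) (Hw1 : is_omega1 ltW) :
  (MA_for (@le_Fn W) -> stick_eq_c W /\ stick'_eq_c W) /\
  (MA_Cohen -> stick''_eq_c W).
Proof.
have W_unc : ~ countable W by case: Hw1 => _ [_ [_ []]].
have nat_W := uncountable_le_card_nat W_unc.
have W_c := omega1_le_card_continuum Hw1.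
split=> [MA | MA_Cohen].
- split; split.
  + exists ctbl_infinite; split; first exact: sticky_for_ctbl_infinite.
    exact: eq_card_ctbl_subsets.
  + move=> X X_sticky; apply: contrapT => c_X.
    apply: (sticky_family_not_small MA (le_card_refl W) X_sticky); split=> //.
    apply: le_card_trans (sticky_le_card_ctbl_subsets X_sticky) _.
    exact: le_card_ctbl_subsets.
  + exact: continuum_sticky_family.
  + by move=> K W_K K_small; apply: no_small_sticky_family.
- split; first exact: (continuum_sticky_family le_card_nat_continuum).
  by move=> K _; apply: no_small_sticky_family (MA_Cohen K) (le_card_refl K).
Qed.
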